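(* In the $3$-fold Cartesian product, a related component of a good set need not be a full component: the good set $T$ is full (so $T$ is its own unique full component), while every related component of $T$ is a singleton; in particular $T$ has infinitely many related components.
   Context: Let $X_1,X_2,X_3$ be pairwise disjoint nonempty sets and $\Omega=X_1\times X_2\times X_3$, with projections $\Pi_i:\Omega\to X_i$. A set $S\subset\Omega$ is good if every function $f:S\to\mathbb C$ can be written $f(w_1,w_2,w_3)=u_1(w_1)+u_2(w_2)+u_3(w_3)$ for all $(w_1,w_2,w_3)\in S$, for some functions $u_i:X_i\to\mathbb C$. A set $S$ is full if it is a maximal good subset of $\Pi_1S\times\Pi_2S\times\Pi_3S$. For a good set $S$, the maximal full subsets of $S$ are its full components (they partition $S$). Two points $p,q$ of a good set $S$ are related if some finite full subset of $S$ contains both; this is an equivalence relation whose classes are the related components of $S$. Construction: fix pairwise distinct elements $x_1,y_1,\alpha_{5k-4},\alpha_{5k-1}$ ($k\ge1$) of $X_1$; pairwise distinct elements $x_2,y_2,\alpha_{5k-3},\alpha_{5k}$ ($k\ge1$) of $X_2$; pairwise distinct elements $x_3,z_3,\alpha_{5k-2}$ ($k\ge1$) of $X_3$. Set the convention $\alpha_{-3}:=y_2$, $\alpha_{-2}:=z_3$. Define $a_1=(x_1,x_2,x_3)$, $a_2=(y_1,y_2,x_3)$, $a_3=(y_1,x_2,z_3)$ and for $n\ge1$: $a_{5n-1}=(\alpha_{5n-4},\alpha_{5n-3},\alpha_{5n-2})$, $a_{5n}=(\alpha_{5n-1},\alpha_{5n},\alpha_{5n-2})$, $a_{5n+1}=(\alpha_{5n-4},\alpha_{5n},\alpha_{5n-7})$,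 $a_{5n+2}=(\alpha_{5n-1},\alpha_{5n-3},x_3)$, $a_{5n+3}=(x_1,\alpha_{5n-8},\alpha_{5n-2})$. Let $T=\{a_i:i\ge1\}$. *)

From Stdlib Require Import Reals List Arith.
Import ListNotations.
Open Scope R_scope.

(* The complex numbers as an additive group: C = R x R with
   componentwise addition.  Goodness only uses addition in C. *)
Definition Cplx : Type := (R * R)%type.
Definition Cadd (a b : Cplx) : Cplx := (fst a + fst b, snd a + snd b).

Section Defs.
Variables X1 X2 X3 : Type.

Definition Omega : Type := (X1 * X2 * X3)%type.
Definition pi1 (w : Omega) : X1 := fst (fst w).
Definition pi2 (w : Omega) : X2 := snd (fst w).
Definition pi3 (w : Omega) : X3 := snd w.

Definition good (S : Omega -> Prop) : Prop :=
  forall f : Omega -> Cplx,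
    exists (u1 : X1 -> Cplx) (u2 : X2 -> Cplx) (u3 : X3 -> Cplx),
      forall w, S w -> f w = Cadd (Cadd (u1 (pi1 w)) (u2 (pi2 w))) (u3 (pi3 w)).

Definition box (S : Omega -> Prop) (w : Omega) : Prop :=
  (exists v, S v /\ pi1 v = pi1 w) /\
  (exists v, S v /\ pi2 v = pi2 w) /\
  (exists v, S v /\ pi3 v = pi3 w).

Definition full (S : Omega -> Prop) : Prop :=
  good S /\
  forall S' : Omega -> Prop,
    (forall w, S w -> S' w) -> (forall w, S' w -> box S w) -> good S' ->
    forall w, S' w -> S w.

Definition finite_set (S : Omega -> Prop) : Prop :=
  exists l : list Omega, forall w, S w -> In w l.

Definition related (S : Omega -> Prop) (p q : Omega) : Prop :=
  exists F : Omega -> Prop,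
    finite_set F /\ (forall w, F w -> S w) /\ full F /\ F p /\ F q.

(* The construction.  alpha_m for m >= 1 is given by al1 m (in X1, when
   m mod 5 is 1 or 4), al2 m (in X2, when m mod 5 is 2 or 0), al3 m
   (in X3, when m mod 5 is 3).  Conventions alpha_{-3} = y2, alpha_{-2} = z3. *)
Definition idx1 (m : nat) : Prop := (1 <= m)%nat /\ (m mod 5 = 1 \/ m mod 5 = 4)%nat.
Definition idx2 (m : nat) : Prop := (1 <= m)%nat /\ (m mod 5 = 2 \/ m mod 5 = 0)%nat.
Definition idx3 (m : nat) : Prop := (1 <= m)%nat /\ (m mod 5 = 3)%nat.

Variables (x1 y1 : X1) (x2 y2 : X2) (x3 z3 : X3).
Variables (al1 : nat -> X1) (al2 : nat -> X2) (al3 : nat -> X3).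

Definition alpha_5n_7 (n : nat) : X3 := if (n =? 1)%nat then z3 else al3 (5 * n - 7).
Definition alpha_5n_8 (n : nat) : X2 := if (n =? 1)%nat then y2 else al2 (5 * n - 8).

Definition T_a1 : Omega := (x1, x2, x3).
Definition T_a2 : Omega := (y1, y2, x3).
Definition T_a3 : Omega := (y1, x2, z3).
(* a_{5n-1}, a_{5n}, a_{5n+1}, a_{5n+2}, a_{5n+3} *)
Definition T_b0 (n : nat) : Omega := (al1 (5*n-4), al2 (5*n-3), al3 (5*n-2)).
Definition T_b1 (n : nat) : Omega := (al1 (5*n-1), al2 (5*n), al3 (5*n-2)).
Definition T_b2 (n : nat) : Omega := (al1 (5*n-4), al2 (5*n), alpha_5n_7 n).
Definition T_b3 (n : nat) : Omega := (al1 (5*n-1), al2 (5*n-3), x3).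
Definition T_b4 (n : nat) : Omega := (x1, alpha_5n_8 n, al3 (5*n-2)).

Definition Tset (w : Omega) : Prop :=
  w = T_a1 \/ w = T_a2 \/ w = T_a3 \/
  exists n : nat, (1 <= n)%nat /\
    (w = T_b0 n \/ w = T_b1 n \/ w = T_b2 n \/ w = T_b3 n \/ w = T_b4 n).

Definition distinct_data : Prop :=
  x1 <> y1 /\ (forall m, idx1 m -> al1 m <> x1 /\ al1 m <> y1) /\
  (forall m m', idx1 m -> idx1 m' -> al1 m = al1 m' -> m = m') /\
  x2 <> y2 /\ (forall m, idx2 m -> al2 m <> x2 /\ al2 m <> y2) /\
  (forall m m', idx2 m -> idx2 m' -> al2 m = al2 m' -> m = m') /\
  x3 <> z3 /\ (forall m, idx3 m -> al3 m <> x3 /\ al3 m <> z3) /\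
  (forall m m', idx3 m -> idx3 m' -> al3 m = al3 m' -> m = m').
End Defs.

From Stdlib Require Import Reals List Arith Lia Lra ZifyNat Classical ClassicalEpsilon.
Open Scope R_scope.

(** The proof works with real "potentials" (d1, d2, d3) on X1, X2, X3.
  A potential is null on S when d1 w1 + d2 w2 + d3 w3 = 0 for every
  w = (w1, w2, w3) in S.  Two general facts about such potentials drive
  everything:
  - if every potential null on a good set S also vanishes on the box
    Pi_1 S x Pi_2 S x Pi_3 S, then S is full ([full_of_rigid]);
  - if F is full and d is null on F, then d also vanishes on every
    "mixed" point (pi1 v1, pi2 v2, pi3 v3) with v1, v2, v3 in F
    ([full_mixed_zero]): otherwise adding that point keeps F good.
  For the construction T we then show: T is good, by solving the
  equations block by block with an explicit recursion ([T_good]); every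
  potential null on T vanishes on all coordinates of T after
  normalisation, hence T is full ([T_full]); and a finite full F inside
  T with two distinct points is refuted by exhibiting, according to the
  highest block met by F, a potential null on F that does not vanish at
  a mixed point ([finite_full_subsingleton]).  Since T has infinitely
  many points, it has infinitely many related components. *)

Definition ind {A : Type} (a z : A) : R :=
  if excluded_middle_informative (a = z) then 1 else 0.

Lemma ind_same {A : Type} (a z : A) : a = z -> ind a z = 1.
Proof. intros E; unfold ind; destruct excluded_middle_informative; congruence. Qed.

Lemma ind_other {A : Type} (a z : A) : a <> z -> ind a z = 0.
Proof. intros E; unfold ind; destruct excluded_middle_informative; congruence. Qed.

Definition pick {Y : Type} (c c' : Y) (v v' : R) (h : Y -> R) (y : Y) : R :=
  if excluded_middle_informative (y = c) then v
  else if excluded_middle_informative (y = c') then v' else h y.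

Lemma pick_fst {Y : Type} (c c' : Y) v v' h : pick c c' v v' h c = v.
Proof. unfold pick; destruct excluded_middle_informative; congruence. Qed.

Lemma pick_snd {Y : Type} (c c' : Y) v v' h : c' <> c -> pick c c' v v' h c' = v'.
Proof. intros; unfold pick; do 2 (destruct excluded_middle_informative; try congruence). Qed.

Lemma pick_other {Y : Type} (c c' y : Y) v v' h : y <> c -> y <> c' -> pick c c' v v' h y = h y.
Proof. intros; unfold pick; do 2 (destruct excluded_middle_informative; try congruence). Qed.

(** The function taking value [V i] at [g i] for [i] in [D] (and 0 off
    the image); well defined where [g] is injective on [D]. *)
Definition glue {I Y : Type} (D : I -> Prop) (g : I -> Y) (V : I -> R) (y : Y) : R :=
  match excluded_middle_informative (exists i, D i /\ g i = y) with
  | left H => V (proj1_sig (constructive_indefinite_description _ H))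
  | right _ => 0
  end.

Lemma glue_at {I Y : Type} (D : I -> Prop) (g : I -> Y) (V : I -> R) i :
  D i -> (forall j, D j -> g j = g i -> j = i) -> glue D g V (g i) = V i.
Proof.
  intros Di Hinj; unfold glue; destruct excluded_middle_informative as [H|H].
  - destruct constructive_indefinite_description as [j [Dj Ej]]; simpl.
    now rewrite (Hinj j Dj Ej).
  - exfalso; eauto.
Qed.

Lemma bounded_has_max (P : nat -> Prop) (K : nat) :
  (exists n, P n) -> (forall n, P n -> (n <= K)%nat) ->
  exists N, P N /\ forall n, P n -> (n <= N)%nat.
Proof.
  revert P; induction K as [|K IH]; intros P [n Pn] HK.
  - exists n; split; [exact Pn|]. intros m Pm; pose proof (HK m Pm); pose proof (HK n Pn); lia.
  - destruct (classic (P (S K))) as [PK|PK].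
    + exists (S K); split; auto.
    + apply IH; [eauto|]. intros m Pm. specialize (HK m Pm).
      destruct (Nat.eq_dec m (S K)) as [->|]; [contradiction|lia].
Qed.

Lemma list_functional_bound {A : Type} (rel : A -> nat -> Prop) (l : list A) :
  (forall a n m, rel a n -> rel a m -> n = m) ->
  exists K, forall a n, In a l -> rel a n -> (n <= K)%nat.
Proof.
  intros Hfun; induction l as [|a l [K IH]].
  - exists O; intros b n [].
  - destruct (classic (exists n, rel a n)) as [[n0 Ha]|Hna].
    + exists (K + n0)%nat. intros b n [->|Hb] Hn.
      * rewrite (Hfun b n n0 Hn Ha); lia.
      * specialize (IH b n Hb Hn); lia.
    + exists K. intros b n [<-|Hb] Hn; [exfalso; eauto|eauto].
Qed.

Section Potentials.
Variables X1 X2 X3 : Type.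
Local Notation Om := (Omega X1 X2 X3).
Local Notation p1 := (pi1 X1 X2 X3).
Local Notation p2 := (pi2 X1 X2 X3).
Local Notation p3 := (pi3 X1 X2 X3).

Definition mixed (d1 : X1 -> R) (d2 : X2 -> R) (d3 : X3 -> R) (v1 v2 v3 : Om) : R :=
  d1 (p1 v1) + d2 (p2 v2) + d3 (p3 v3).

Definition null_on (S : Om -> Prop) (d1 : X1 -> R) (d2 : X2 -> R) (d3 : X3 -> R) : Prop :=
  forall v, S v -> mixed d1 d2 d3 v v v = 0.

(** Goodness may be tested on real-valued functions only: the real and
    imaginary parts decompose separately. *)
Lemma good_of_real (S : Om -> Prop) :
  (forall f : Om -> R, exists u1 u2 u3, forall w, S w -> f w = mixed u1 u2 u3 w w w) ->
  good X1 X2 X3 S.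
Proof.
  intros Hreal f.
  destruct (Hreal (fun w => fst (f w))) as (a1 & a2 & a3 & Ha).
  destruct (Hreal (fun w => snd (f w))) as (b1 & b2 & b3 & Hb).
  exists (fun z => (a1 z, b1 z)), (fun z => (a2 z, b2 z)), (fun z => (a3 z, b3 z)).
  intros w Hw; apply injective_projections; [exact (Ha w Hw)|exact (Hb w Hw)].
Qed.

Lemma real_of_good (S : Om -> Prop) (f : Om -> R) :
  good X1 X2 X3 S -> exists u1 u2 u3, forall w, S w -> f w = mixed u1 u2 u3 w w w.
Proof.
  intros HS; destruct (HS (fun w => (f w, 0))) as (u1 & u2 & u3 & Hu).
  exists (fun z => fst (u1 z)), (fun z => fst (u2 z)), (fun z => fst (u3 z)).
  intros w Hw; exact (f_equal fst (Hu w Hw)).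
Qed.

(** A good set stays good when we add a point at which some potential
    null on the set does not vanish: that potential adjusts the value
    at the new point without disturbing the old ones. *)
Lemma good_add_point (S : Om -> Prop) d1 d2 d3 (w : Om) :
  good X1 X2 X3 S -> null_on S d1 d2 d3 -> mixed d1 d2 d3 w w w <> 0 ->
  good X1 X2 X3 (fun v => S v \/ v = w).
Proof.
  intros HS Hd Hw; apply good_of_real; intros f.
  destruct (real_of_good S f HS) as (u1 & u2 & u3 & Hu).
  set (t := (f w - mixed u1 u2 u3 w w w) / mixed d1 d2 d3 w w w).
  exists (fun z => u1 z + t * d1 z), (fun z => u2 z + t * d2 z), (fun z => u3 z + t * d3 z).
  intros v [Hv| ->].
  - transitivity (mixed u1 u2 u3 v v v + t * mixed d1 d2 d3 v v v).
    + rewrite (Hd v Hv), (Hu v Hv); ring.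
    + unfold mixed; ring.
  - unfold t, mixed in *; field; exact Hw.
Qed.

Lemma full_mixed_zero (F : Om -> Prop) d1 d2 d3 v1 v2 v3 :
  full X1 X2 X3 F -> null_on F d1 d2 d3 -> F v1 -> F v2 -> F v3 ->
  mixed d1 d2 d3 v1 v2 v3 = 0.
Proof.
  intros [HFgood HFmax] Hd F1 F2 F3.
  set (w := (p1 v1, p2 v2, p3 v3) : Om).
  change (mixed d1 d2 d3 v1 v2 v3) with (mixed d1 d2 d3 w w w).
  destruct (Req_dec (mixed d1 d2 d3 w w w) 0) as [|Hne]; [assumption|].
  apply Hd, (HFmax (fun v => F v \/ v = w)); [auto| |eapply good_add_point; eauto|auto].
  intros v [Fv| ->].
  - repeat split; exists v; auto.
  - repeat split; [exists v1|exists v2|exists v3]; auto.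
Qed.

Lemma full_of_rigid (S : Om -> Prop) :
  good X1 X2 X3 S ->
  (forall d1 d2 d3, null_on S d1 d2 d3 -> forall w, box X1 X2 X3 S w -> mixed d1 d2 d3 w w w = 0) ->
  full X1 X2 X3 S.
Proof.
  intros HS Hrigid; split; [exact HS|].
  intros S' HSS' HS'box HS' w Hw; apply NNPP; intros Hnw.
  destruct (real_of_good S' (ind w) HS') as (u1 & u2 & u3 & Hu).
  assert (Hnull : null_on S u1 u2 u3).
  { intros v Hv; rewrite <- (Hu v (HSS' v Hv)); apply ind_other; congruence. }
  pose proof (Hrigid _ _ _ Hnull w (HS'box w Hw)) as Hzero.
  rewrite <- (Hu w Hw), ind_same in Hzero; [lra|reflexivity].
Qed.

End Potentials.

(** The construction: block n of T consists of b0 n, ..., b4 n, built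
    from A_n = alpha_{5n-4}, B_n = alpha_{5n-3}, C_n = alpha_{5n-2},
    D_n = alpha_{5n-1}, E_n = alpha_{5n}; the hypotheses below unpack
    [distinct_data]. *)
Section Construction.
Variables X1 X2 X3 : Type.
Variables (x1 y1 : X1) (x2 y2 : X2) (x3 z3 : X3).
Variables (al1 : nat -> X1) (al2 : nat -> X2) (al3 : nat -> X3).
Hypothesis x1_y1 : x1 <> y1.
Hypothesis al1_new : forall m, idx1 m -> al1 m <> x1 /\ al1 m <> y1.
Hypothesis al1_inj : forall m m', idx1 m -> idx1 m' -> al1 m = al1 m' -> m = m'.
Hypothesis x2_y2 : x2 <> y2.
Hypothesis al2_new : forall m, idx2 m -> al2 m <> x2 /\ al2 m <> y2.
Hypothesis al2_inj : forall m m', idx2 m -> idx2 m' -> al2 m = al2 m' -> m = m'.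
Hypothesis x3_z3 : x3 <> z3.
Hypothesis al3_new : forall m, idx3 m -> al3 m <> x3 /\ al3 m <> z3.
Hypothesis al3_inj : forall m m', idx3 m -> idx3 m' -> al3 m = al3 m' -> m = m'.

Local Notation Om := (Omega X1 X2 X3).
Local Notation p1 := (pi1 X1 X2 X3).
Local Notation p2 := (pi2 X1 X2 X3).
Local Notation p3 := (pi3 X1 X2 X3).
Local Notation mixed := (mixed X1 X2 X3).
Local Notation null_on := (null_on X1 X2 X3).
Local Notation full := (full X1 X2 X3).
Local Notation T := (Tset X1 X2 X3 x1 y1 x2 y2 x3 z3 al1 al2 al3).
Local Notation a1 := (T_a1 X1 X2 X3 x1 x2 x3).
Local Notation a2 := (T_a2 X1 X2 X3 y1 y2 x3).
Local Notation a3 := (T_a3 X1 X2 X3 y1 x2 z3).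
Local Notation b0 := (T_b0 X1 X2 X3 al1 al2 al3).
Local Notation b1 := (T_b1 X1 X2 X3 al1 al2 al3).
Local Notation b2 := (T_b2 X1 X2 X3 z3 al1 al2 al3).
Local Notation b3 := (T_b3 X1 X2 X3 x3 al1 al2).
Local Notation b4 := (T_b4 X1 X2 X3 x1 y2 al2 al3).
(** alpha_{5n-8} and alpha_{5n-7}, i.e. the B- and C-points of block n-1. *)
Local Notation prevB n := (alpha_5n_8 X2 y2 al2 n).
Local Notation prevC n := (alpha_5n_7 X3 z3 al3 n).

Ltac index_ok := unfold idx1, idx2, idx3; lia.
Ltac refute_eq H :=
  match type of H with
  | al1 ?i = al1 ?j => apply al1_inj in H; [lia|index_ok|index_ok]
  | al2 ?i = al2 ?j => apply al2_inj in H; [lia|index_ok|index_ok]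
  | al3 ?i = al3 ?j => apply al3_inj in H; [lia|index_ok|index_ok]
  | al1 ?i = x1 => exact (proj1 (al1_new i ltac:(index_ok)) H)
  | al1 ?i = y1 => exact (proj2 (al1_new i ltac:(index_ok)) H)
  | al2 ?i = x2 => exact (proj1 (al2_new i ltac:(index_ok)) H)
  | al2 ?i = y2 => exact (proj2 (al2_new i ltac:(index_ok)) H)
  | al3 ?i = x3 => exact (proj1 (al3_new i ltac:(index_ok)) H)
  | al3 ?i = z3 => exact (proj2 (al3_new i ltac:(index_ok)) H)
  | x1 = y1 => exact (x1_y1 H)
  | x2 = y2 => exact (x2_y2 H)
  | x3 = z3 => exact (x3_z3 H)
  end.
Ltac refute H := first [refute_eq H | symmetry in H; refute_eq H].
Ltac distinct := let H := fresh "E" in intro H; refute H.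

Ltac unfold_points :=
  unfold mixed, pi1, pi2, pi3, T_a1, T_a2, T_a3, T_b0, T_b1, T_b2, T_b3, T_b4 in *;
  cbn [fst snd] in *.
Ltac unfold_prev :=
  unfold alpha_5n_7, alpha_5n_8 in *;
  repeat match goal with |- context [Nat.eqb ?n 1] =>
    destruct (Nat.eqb_spec n 1); try (exfalso; lia) end;
  cbn beta iota.
Ltac eval_ind :=
  repeat match goal with |- context [ind ?a ?b] =>
    first [ rewrite (ind_same a b) by (reflexivity || (f_equal; lia))
          | rewrite (ind_other a b) by distinct ] end.
Ltac compute_potential := unfold_points; unfold_prev; eval_ind.

Definition in_block (v : Om) (n : nat) : Prop :=
  v = b0 n \/ v = b1 n \/ v = b2 n \/ v = b3 n \/ v = b4 n.

Lemma T_block v n : (1 <= n)%nat -> in_block v n -> T v.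
Proof. intros; right; right; right; exists n; auto. Qed.

Lemma prevB_succ n : (1 <= n)%nat -> prevB (S n) = al2 (5 * n - 3).
Proof. intros; unfold alpha_5n_8. destruct (Nat.eqb_spec (S n) 1); [lia|]. f_equal; lia. Qed.

Lemma prevC_succ n : (1 <= n)%nat -> prevC (S n) = al3 (5 * n - 2).
Proof. intros; unfold alpha_5n_7. destruct (Nat.eqb_spec (S n) 1); [lia|]. f_equal; lia. Qed.

(** ** T is good
  For real f on T, normalise u1 x1 = 0, u3 x3 = 0, u2 x2 = f a1.  Writing
  A_n, B_n, C_n, D_n, E_n for the values at alpha_{5n-4}, ..., alpha_{5n},
  the five equations of block n force 2 C_n - C_{n-1} = gap n, and then
  determine B_{n-1}, A_n, E_n, D_n; the points a2, a3 fix C_0 (the value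
  at z3). *)
Section Solution.
Variable f : Om -> R.

Definition gap (n : nat) : R := f (b0 n) + f (b1 n) - f (b2 n) - f (b3 n).
Definition solC0 : R := 2 / 3 * (f a3 - f a2 - f a1 + f (b4 1) - gap 1 / 2).
Fixpoint solC (k : nat) : R :=
  match k with O => solC0 | S k' => (gap (S k') + solC k') / 2 end.
Definition solB (n : nat) : R := f (b4 (S n)) - solC (S n).
Definition solA (n : nat) : R := f (b0 n) - solB n - solC n.
Definition solE (n : nat) : R := f (b2 n) - solC (n - 1) - solA n.
Definition solD (n : nat) : R := f (b1 n) - solC n - solE n.

Definition solval (m : nat) : R :=
  match m mod 5 with
  | 1%nat => solA (S (m / 5))
  | 2%nat => solB (S (m / 5))
  | 3%nat => solC (S (m / 5))
  | 4%nat => solD (S (m / 5))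
  | _ => solE (m / 5)
  end.

Definition sol1 : X1 -> R := pick x1 y1 0 (f a2 - solB 0) (glue idx1 al1 solval).
Definition sol2 : X2 -> R := pick x2 y2 (f a1) (solB 0) (glue idx2 al2 solval).
Definition sol3 : X3 -> R := pick x3 z3 0 solC0 (glue idx3 al3 solval).

Lemma solval_block n : (1 <= n)%nat ->
  solval (5 * n - 4) = solA n /\ solval (5 * n - 3) = solB n /\
  solval (5 * n - 2) = solC n /\ solval (5 * n - 1) = solD n /\ solval (5 * n) = solE n.
Proof.
  intros Hn; unfold solval; repeat split.
  - replace ((5 * n - 4) mod 5)%nat with 1%nat by lia; f_equal; lia.
  - replace ((5 * n - 3) mod 5)%nat with 2%nat by lia; f_equal; lia.
  - replace ((5 * n - 2) mod 5)%nat with 3%nat by lia; f_equal; lia.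
  - replace ((5 * n - 1) mod 5)%nat with 4%nat by lia; f_equal; lia.
  - replace ((5 * n) mod 5)%nat with 0%nat by lia; f_equal; lia.
Qed.

Lemma sol1_al m : idx1 m -> sol1 (al1 m) = solval m.
Proof.
  intros Hm; destruct (al1_new m Hm); unfold sol1; rewrite pick_other by assumption.
  apply glue_at; [exact Hm|]. intros j Hj E; exact (al1_inj j m Hj Hm E).
Qed.

Lemma sol2_al m : idx2 m -> sol2 (al2 m) = solval m.
Proof.
  intros Hm; destruct (al2_new m Hm); unfold sol2; rewrite pick_other by assumption.
  apply glue_at; [exact Hm|]. intros j Hj E; exact (al2_inj j m Hj Hm E).
Qed.

Lemma sol3_al m : idx3 m -> sol3 (al3 m) = solval m.
Proof.
  intros Hm; destruct (al3_new m Hm); unfold sol3; rewrite pick_other by assumption.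
  apply glue_at; [exact Hm|]. intros j Hj E; exact (al3_inj j m Hj Hm E).
Qed.

Lemma sol2_prevB n : (1 <= n)%nat -> sol2 (prevB n) = solB (n - 1).
Proof.
  intros Hn; unfold alpha_5n_8; destruct (Nat.eqb_spec n 1) as [->|Hn1].
  - apply pick_snd; congruence.
  - rewrite sol2_al by index_ok. replace (5 * n - 8)%nat with (5 * (n - 1) - 3)%nat by lia.
    apply solval_block; lia.
Qed.

Lemma sol3_prevC n : (1 <= n)%nat -> sol3 (prevC n) = solC (n - 1).
Proof.
  intros Hn; unfold alpha_5n_7; destruct (Nat.eqb_spec n 1) as [->|Hn1].
  - apply pick_snd; congruence.
  - rewrite sol3_al by index_ok. replace (5 * n - 7)%nat with (5 * (n - 1) - 2)%nat by lia.
    apply solval_block; lia.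
Qed.

Lemma solC_step n : (1 <= n)%nat -> solC n = (gap n + solC (n - 1)) / 2.
Proof. intros Hn; destruct n as [|n]; [lia|]. simpl; rewrite Nat.sub_0_r; reflexivity. Qed.

Lemma sol_decomposes w : T w -> f w = mixed sol1 sol2 sol3 w w w.
Proof.
  intros [-> | [-> | [-> | [n [Hn Hw]]]]]; unfold mixed; cbn [pi1 pi2 pi3 fst snd T_a1 T_a2 T_a3].
  - unfold sol1, sol2, sol3; rewrite !pick_fst; ring.
  - unfold sol1, sol2, sol3; rewrite pick_snd, pick_snd, pick_fst by congruence; ring.
  - unfold sol1, sol2, sol3; rewrite pick_snd, pick_fst, pick_snd by congruence.
    unfold solB; simpl solC; unfold solC0; lra.
  - destruct (solval_block n Hn) as (SA & SB & SC & SD & SE).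
    destruct Hw as [-> | [-> | [-> | [-> | ->]]]]; cbn [pi1 pi2 pi3 fst snd T_b0 T_b1 T_b2 T_b3 T_b4].
    + rewrite sol1_al, sol2_al, sol3_al, SA, SB, SC by index_ok. unfold solA; ring.
    + rewrite sol1_al, sol2_al, sol3_al, SD, SE, SC by index_ok. unfold solD; ring.
    + rewrite sol1_al, sol2_al, sol3_prevC, SA, SE by (index_ok || lia). unfold solE; ring.
    + unfold sol3 at 1; rewrite pick_fst, sol1_al, sol2_al, SD, SB by index_ok.
      unfold solD, solE, solA; rewrite (solC_step n Hn); unfold gap; lra.
    + unfold sol1 at 1; rewrite pick_fst, sol2_prevB, sol3_al, SC by (index_ok || lia).
      unfold solB; replace (S (n - 1)) with n by lia; ring.
Qed.

End Solution.

Lemma T_good : good X1 X2 X3 T.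
Proof.
  apply good_of_real; intros f.
  exists (sol1 f), (sol2 f), (sol3 f); apply sol_decomposes.
Qed.

(** ** T is full
  A potential null on T and normalised by s1 x1 = 0, s3 x3 = 0 vanishes
  at every coordinate of every point of T: the block equations give
  2 C_n = C_{n-1} for the values of s3 at the C-points, the points a1,
  a2, a3, b4 1 force the value at z3 (= C_0) to vanish, and then
  everything else follows block by block. *)
Section Rigidity.
Variables (s1 : X1 -> R) (s2 : X2 -> R) (s3 : X3 -> R).
Hypothesis s_null : null_on T s1 s2 s3.
Hypothesis s1_x1 : s1 x1 = 0.
Hypothesis s3_x3 : s3 x3 = 0.

Lemma block_equations n : (1 <= n)%nat ->
  s1 (al1 (5 * n - 4)) + s2 (al2 (5 * n - 3)) + s3 (al3 (5 * n - 2)) = 0 /\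
  s1 (al1 (5 * n - 1)) + s2 (al2 (5 * n)) + s3 (al3 (5 * n - 2)) = 0 /\
  s1 (al1 (5 * n - 4)) + s2 (al2 (5 * n)) + s3 (prevC n) = 0 /\
  s1 (al1 (5 * n - 1)) + s2 (al2 (5 * n - 3)) = 0 /\
  s2 (prevB n) + s3 (al3 (5 * n - 2)) = 0.
Proof.
  intros Hn.
  pose proof (s_null (b0 n) (T_block _ n Hn ltac:(left; reflexivity))).
  pose proof (s_null (b1 n) (T_block _ n Hn ltac:(right; left; reflexivity))).
  pose proof (s_null (b2 n) (T_block _ n Hn ltac:(do 2 right; left; reflexivity))).
  pose proof (s_null (b3 n) (T_block _ n Hn ltac:(do 3 right; left; reflexivity))).
  pose proof (s_null (b4 n) (T_block _ n Hn ltac:(do 4 right; reflexivity))).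
  unfold_points; rewrite s1_x1, s3_x3 in *; repeat split; lra.
Qed.

Lemma C_halving n : (1 <= n)%nat -> 2 * s3 (al3 (5 * n - 2)) = s3 (prevC n).
Proof. intros Hn; destruct (block_equations n Hn) as (E0 & E1 & E2 & E3 & E4); lra. Qed.

Lemma special_values_zero : s2 x2 = 0 /\ s1 y1 = 0 /\ s2 y2 = 0 /\ s3 z3 = 0.
Proof.
  pose proof (s_null a1 ltac:(left; reflexivity)).
  pose proof (s_null a2 ltac:(right; left; reflexivity)).
  pose proof (s_null a3 ltac:(do 2 right; left; reflexivity)).
  pose proof (C_halving 1 (le_n 1)) as Half.
  destruct (block_equations 1 (le_n 1)) as (_ & _ & _ & _ & E4).
  unfold alpha_5n_7, alpha_5n_8 in *; cbn [Nat.eqb] in *.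
  unfold_points; rewrite s1_x1, s3_x3 in *; repeat split; lra.
Qed.

Lemma C_zero n : (1 <= n)%nat -> s3 (al3 (5 * n - 2)) = 0 /\ s3 (prevC n) = 0.
Proof.
  induction n as [|n IH]; intros Hn; [lia|].
  assert (Hprev : s3 (prevC (S n)) = 0).
  { destruct (Nat.eq_dec n 0) as [->|Hn0].
    - apply special_values_zero.
    - rewrite prevC_succ by lia; apply IH; lia. }
  pose proof (C_halving (S n) Hn); split; lra.
Qed.

Lemma B_zero n : (1 <= n)%nat -> s2 (prevB n) = 0 /\ s2 (al2 (5 * n - 3)) = 0.
Proof.
  intros Hn; split.
  - destruct (block_equations n Hn) as (_ & _ & _ & _ & E4); pose proof (C_zero n Hn); lra.
  - rewrite <- prevB_succ by exact Hn.
    destruct (block_equations (S n) ltac:(lia)) as (_ & _ & _ & _ & E4).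
    pose proof (C_zero (S n) ltac:(lia)); lra.
Qed.

Lemma coordinates_zero v : T v -> s1 (p1 v) = 0 /\ s2 (p2 v) = 0 /\ s3 (p3 v) = 0.
Proof.
  destruct special_values_zero as (Zx2 & Zy1 & Zy2 & Zz3).
  intros [-> | [-> | [-> | [n [Hn Hv]]]]]; [unfold_points; repeat split; lra..|].
  destruct (block_equations n Hn) as (E0 & E1 & E2 & E3 & E4).
  destruct (C_zero n Hn), (B_zero n Hn).
  destruct Hv as [-> | [-> | [-> | [-> | ->]]]]; unfold_points; repeat split; lra.
Qed.

End Rigidity.

Lemma T_rigid d1 d2 d3 : null_on T d1 d2 d3 ->
  forall w, box X1 X2 X3 T w -> mixed d1 d2 d3 w w w = 0.
Proof.
  intros Hd w ([v1 [T1 E1]] & [v2 [T2 E2]] & [v3 [T3 E3]]).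
  set (s1 := fun z => d1 z - d1 x1).
  set (s2 := fun z => d2 z + d1 x1 + d3 x3).
  set (s3 := fun z => d3 z - d3 x3).
  assert (Hs : null_on T s1 s2 s3).
  { intros v Hv; rewrite <- (Hd v Hv); unfold mixed, s1, s2, s3; ring. }
  assert (N1 : s1 x1 = 0) by (unfold s1; ring).
  assert (N3 : s3 x3 = 0) by (unfold s3; ring).
  destruct (coordinates_zero s1 s2 s3 Hs N1 N3 v1 T1) as (Z1 & _ & _).
  destruct (coordinates_zero s1 s2 s3 Hs N1 N3 v2 T2) as (_ & Z2 & _).
  destruct (coordinates_zero s1 s2 s3 Hs N1 N3 v3 T3) as (_ & _ & Z3).
  rewrite E1 in Z1; rewrite E2 in Z2; rewrite E3 in Z3.
  unfold mixed, s1, s2, s3 in *; lra.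
Qed.

Lemma T_full : full T.
Proof. exact (full_of_rigid X1 X2 X3 T T_good T_rigid). Qed.

(** ** Finite full subsets of T are subsingletons *)

Lemma block_unique v n m : (1 <= n)%nat -> (1 <= m)%nat ->
  in_block v n -> in_block v m -> n = m.
Proof.
  intros Hn Hm Hvn Hvm; destruct (Nat.eq_dec n m) as [|Hnm]; [assumption|exfalso].
  destruct Hvn as [->|[->|[->|[->| ->]]]]; destruct Hvm as [E|[E|[E|[E|E]]]];
    revert E; unfold_points; unfold_prev; intro E; injection E; intros;
    match goal with H : _ = _ |- _ => refute H end.
Qed.

Definition below (N : nat) (v : Om) : Prop :=
  T v /\ forall n, (1 <= n)%nat -> in_block v n -> (n <= N)%nat.

Definition in_core (v : Om) (N : nat) : Prop :=
  v = b0 N \/ v = b1 N \/ v = b2 N \/ v = b3 N.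

Definition in_base (v : Om) : Prop := v = a1 \/ v = a2 \/ v = a3 \/ v = b4 1.

Lemma below_zero_base v : below 0 v -> in_base v.
Proof.
  intros [[-> | [-> | [-> | [n [Hn Hv]]]]] Hmax]; unfold in_base; auto.
  specialize (Hmax n Hn Hv); lia.
Qed.

Lemma below_top N v : (1 <= N)%nat -> below N v -> ~ in_core v N ->
  below (N - 1) v \/ v = b4 N.
Proof.
  intros HN [Tv Hmax] Hcore.
  destruct (classic (in_block v N)) as [HvN|HvN].
  - right; destruct HvN as [E|[E|[E|[E|E]]]]; [exfalso; apply Hcore; red; tauto..|exact E].
  - left; split; [exact Tv|]. intros n Hn Hv.
    destruct (Nat.eq_dec n N) as [->|]; [contradiction|]. specialize (Hmax n Hn Hv); lia.
Qed.

(** The potential cancelling inside the square {A_N, D_N} x {B_N, E_N}: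
    null on everything up to block N, equal to -1 in the first
    coordinate of the core of block N. *)
Definition cut1 (N : nat) (z : X1) : R := - ind (al1 (5 * N - 4)) z - ind (al1 (5 * N - 1)) z.
Definition cut2 (N : nat) (z : X2) : R := ind (al2 (5 * N - 3)) z + ind (al2 (5 * N)) z.
Definition cut3 (z : X3) : R := 0.

Lemma cut_null N : (1 <= N)%nat -> null_on (below N) (cut1 N) (cut2 N) cut3.
Proof.
  intros HN v [[-> | [-> | [-> | [n [Hn Hv]]]]] Hmax];
    unfold cut1, cut2, cut3; [compute_potential; lra..|].
  pose proof (Hmax n Hn Hv).
  destruct (Nat.eq_dec n N) as [->|];
    destruct Hv as [-> | [-> | [-> | [-> | ->]]]]; compute_potential; lra.
Qed.

Lemma cut2_off_core N v : (1 <= N)%nat -> below N v -> ~ in_core v N -> cut2 N (p2 v) = 0.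
Proof.
  intros HN [[-> | [-> | [-> | [n [Hn Hv]]]]] Hmax] Hcore;
    unfold cut2; [compute_potential; lra..|].
  pose proof (Hmax n Hn Hv).
  destruct (Nat.eq_dec n N) as [->|].
  - destruct Hv as [E|[E|[E|[E| ->]]]]; [exfalso; apply Hcore; red; tauto..|].
    compute_potential; lra.
  - destruct Hv as [-> | [-> | [-> | [-> | ->]]]]; compute_potential; lra.
Qed.

Lemma core_closed (F : Om -> Prop) N pp : (1 <= N)%nat -> full F ->
  (forall v, F v -> below N v) -> F pp -> in_core pp N -> forall v, F v -> in_core v N.
Proof.
  intros HN HF Fbelow Fpp Cpp v Fv; apply NNPP; intros Cv.
  pose proof (full_mixed_zero X1 X2 X3 F _ _ _ pp v pp HF
    (fun w Fw => cut_null N HN w (Fbelow w Fw)) Fpp Fv Fpp) as Hz.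
  unfold mixed in Hz.
  rewrite (cut2_off_core N v HN (Fbelow v Fv) Cv) in Hz.
  destruct Cpp as [-> | [-> | [-> | ->]]]; revert Hz; unfold cut1, cut3; compute_potential; lra.
Qed.

Definition core1 (N : nat) (z : X1) : R := - ind (al1 (5 * N - 4)) z.
Definition core2 (N : nat) (z : X2) : R := ind (al2 (5 * N - 3)) z.
Definition core3 (N : nat) (z : X3) : R := ind (prevC N) z - ind x3 z.

Lemma core_null N : (1 <= N)%nat -> null_on (fun v => in_core v N) (core1 N) (core2 N) (core3 N).
Proof.
  intros HN v [-> | [-> | [-> | ->]]]; unfold core1, core2, core3; compute_potential; lra.
Qed.

Lemma core_subsingleton (F : Om -> Prop) N : (1 <= N)%nat -> full F ->
  (forall v, F v -> in_core v N) -> forall p q, F p -> F q -> p = q.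
Proof.
  intros HN HF Fcore p q Fp Fq; apply NNPP; intros Hpq.
  pose proof (fun v1 v2 v3 => full_mixed_zero X1 X2 X3 F _ _ _ v1 v2 v3 HF
    (fun w Fw => core_null N HN w (Fcore w Fw))) as Hz.
  destruct (Fcore p Fp) as [-> | [-> | [-> | ->]]];
    destruct (Fcore q Fq) as [-> | [-> | [-> | ->]]]; try congruence;
  first
    [ pose proof (Hz (b0 N) (b1 N) (b0 N) ltac:(auto) ltac:(auto) ltac:(auto)) as M
    | pose proof (Hz (b0 N) (b2 N) (b0 N) ltac:(auto) ltac:(auto) ltac:(auto)) as M
    | pose proof (Hz (b3 N) (b0 N) (b0 N) ltac:(auto) ltac:(auto) ltac:(auto)) as M
    | pose proof (Hz (b1 N) (b2 N) (b2 N) ltac:(auto) ltac:(auto) ltac:(auto)) as M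
    | pose proof (Hz (b1 N) (b1 N) (b3 N) ltac:(auto) ltac:(auto) ltac:(auto)) as M
    | pose proof (Hz (b3 N) (b2 N) (b2 N) ltac:(auto) ltac:(auto) ltac:(auto)) as M ];
  revert M; unfold core1, core2, core3; compute_potential; lra.
Qed.

Definition base1 (z : X1) : R := - ind y1 z.
Definition base2 (z : X2) : R := ind y2 z.
Definition base3 (z : X3) : R := ind z3 z - ind (al3 (5 * 1 - 2)) z.

Lemma base_null : null_on in_base base1 base2 base3.
Proof. intros v [-> | [-> | [-> | ->]]]; unfold base1, base2, base3; compute_potential; lra. Qed.

Lemma base_subsingleton (F : Om -> Prop) : full F ->
  (forall v, F v -> in_base v) -> forall p q, F p -> F q -> p = q.
Proof.
  intros HF Fbase p q Fp Fq; apply NNPP; intros Hpq.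
  pose proof (fun v1 v2 v3 => full_mixed_zero X1 X2 X3 F _ _ _ v1 v2 v3 HF
    (fun w Fw => base_null w (Fbase w Fw))) as Hz.
  destruct (Fbase p Fp) as [-> | [-> | [-> | ->]]];
    destruct (Fbase q Fq) as [-> | [-> | [-> | ->]]]; try congruence;
  first
    [ pose proof (Hz a1 a2 a1 ltac:(auto) ltac:(auto) ltac:(auto)) as M
    | pose proof (Hz a1 a1 a3 ltac:(auto) ltac:(auto) ltac:(auto)) as M
    | pose proof (Hz a2 a2 a3 ltac:(auto) ltac:(auto) ltac:(auto)) as M
    | pose proof (Hz (b4 1) (b4 1) a1 ltac:(auto) ltac:(auto) ltac:(auto)) as M
    | pose proof (Hz (b4 1) (b4 1) a2 ltac:(auto) ltac:(auto) ltac:(auto)) as M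
    | pose proof (Hz (b4 1) (b4 1) a3 ltac:(auto) ltac:(auto) ltac:(auto)) as M ];
  revert M; unfold base1, base2, base3; compute_potential; lra.
Qed.

(** Above level 1, the point b4 N is separated from everything below
    block N by the cut potential of block N-1 corrected at C_N. *)
Definition step3 (N : nat) (z : X3) : R := - ind (al3 (5 * N - 2)) z.

Lemma step3_below N v : (2 <= N)%nat -> below (N - 1) v -> step3 N (p3 v) = 0.
Proof.
  intros HN [[-> | [-> | [-> | [n [Hn Hv]]]]] Hmax]; unfold step3; [compute_potential; lra..|].
  pose proof (Hmax n Hn Hv).
  destruct Hv as [-> | [-> | [-> | [-> | ->]]]]; compute_potential; lra.
Qed.

Lemma step_null N : (2 <= N)%nat ->
  null_on (fun v => below (N - 1) v \/ v = b4 N) (cut1 (N - 1)) (cut2 (N - 1)) (step3 N).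
Proof.
  intros HN v [Hv | ->].
  - pose proof (cut_null (N - 1) ltac:(lia) v Hv) as Hcut.
    pose proof (step3_below N v HN Hv) as Hstep.
    unfold mixed, cut3 in *; lra.
  - unfold cut1, cut2, step3; compute_potential; lra.
Qed.

Lemma step_top (F : Om -> Prop) N r : (2 <= N)%nat -> full F ->
  (forall v, F v -> below (N - 1) v \/ v = b4 N) -> F (b4 N) -> F r -> r = b4 N.
Proof.
  intros HN HF Fstep Fb4 Fr; destruct (Fstep r Fr) as [Hr|]; [exfalso|assumption].
  pose proof (full_mixed_zero X1 X2 X3 F _ _ _ (b4 N) (b4 N) r HF
    (fun w Fw => step_null N HN w (Fstep w Fw)) Fb4 Fb4 Fr) as Hz.
  unfold mixed in Hz; rewrite (step3_below N r HN Hr) in Hz.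
  revert Hz; unfold cut1, cut2; compute_potential; lra.
Qed.

(** Let N
    be the highest block it meets.  If it meets the core of block N it
    lies in that core; otherwise it lies below block N-1 plus b4 N, and
    the level-one or step potential separates its points. *)
Lemma finite_full_subsingleton (F : Om -> Prop) p q :
  finite_set X1 X2 X3 F -> (forall v, F v -> T v) -> full F -> F p -> F q -> p = q.
Proof.
  intros [l Hl] FT HF Fp Fq.
  set (touched := fun n => (1 <= n)%nat /\ exists v, F v /\ in_block v n).
  destruct (classic (exists n, touched n)) as [Hex|Hnone].
  2: { apply (base_subsingleton F HF); [|assumption..].
       intros v Fv; apply below_zero_base; split; [auto|].
       intros n Hn Hv; exfalso; apply Hnone; exists n; split; eauto. }
  destruct (list_functional_bound (fun v n => (1 <= n)%nat /\ in_block v n) l) as [K HK].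
  { intros v n m [Hn Hvn] [Hm Hvm]; exact (block_unique v n m Hn Hm Hvn Hvm). }
  destruct (bounded_has_max touched K Hex) as [N [[HN [v0 [Fv0 Bv0]]] Hmax]].
  { intros n [Hn [v [Fv Hv]]]; exact (HK v n (Hl v Fv) (conj Hn Hv)). }
  assert (Fbelow : forall v, F v -> below N v).
  { intros v Fv; split; [auto|]. intros n Hn Hv; apply Hmax; split; eauto. }
  destruct (classic (exists v, F v /\ in_core v N)) as [[pp [Fpp Cpp]]|Hnocore].
  - exact (core_subsingleton F N HN HF (core_closed F N pp HN HF Fbelow Fpp Cpp) p q Fp Fq).
  - assert (Fstep : forall v, F v -> below (N - 1) v \/ v = b4 N).
    { intros v Fv; apply below_top; eauto. }
    assert (Fb4 : F (b4 N)).
    { destruct Bv0 as [E|[E|[E|[E|E]]]]; [exfalso; apply Hnocore; exists v0; unfold in_core; tauto..|].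
      rewrite <- E; exact Fv0. }
    destruct (Nat.eq_dec N 1) as [->|HN1].
    + apply (base_subsingleton F HF); [|assumption..].
      intros v Fv; destruct (Fstep v Fv) as [Hv| ->]; [now apply below_zero_base|do 3 right; reflexivity].
    + rewrite (step_top F N p), (step_top F N q); auto; lia.
Qed.

Lemma T_not_listed (l : list Om) : exists n, (1 <= n)%nat /\ ~ In (b0 n) l.
Proof.
  destruct (list_functional_bound (fun v n => (1 <= n)%nat /\ in_block v n) l) as [K HK].
  { intros v n m [Hn Hvn] [Hm Hvm]; exact (block_unique v n m Hn Hm Hvn Hvm). }
  exists (S K); split; [lia|]. intros Hin.
  pose proof (HK (b0 (S K)) (S K) Hin ltac:(split; [lia|left; reflexivity])); lia.
Qed.

Lemma related_only_self p q : T p -> T q -> related X1 X2 X3 T p q -> p = q.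
Proof.
  intros _ _ (F & Hfin & FT & HF & Fp & Fq).
  exact (finite_full_subsingleton F p q Hfin FT HF Fp Fq).
Qed.

Lemma unlisted_component (l : list Om) :
  exists p, T p /\ forall q, In q l -> ~ related X1 X2 X3 T p q.
Proof.
  destruct (T_not_listed l) as [n [Hn Hnl]].
  assert (Tp : T (b0 n)) by (apply (T_block _ n Hn); left; reflexivity).
  exists (b0 n); split; [exact Tp|]. intros q Hq Hrel.
  assert (Tq : T q) by (destruct Hrel as (F & _ & FT & _ & _ & Fq); auto).
  apply Hnl; rewrite (related_only_self _ q Tp Tq Hrel); exact Hq.
Qed.

End Construction.

Theorem mainTheorem5 (X1 X2 X3 : Type)
  (x1 y1 : X1) (x2 y2 : X2) (x3 z3 : X3)
  (al1 : nat -> X1) (al2 : nat -> X2) (al3 : nat -> X3)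
  (Hdist : distinct_data X1 X2 X3 x1 y1 x2 y2 x3 z3 al1 al2 al3) :
  let T := Tset X1 X2 X3 x1 y1 x2 y2 x3 z3 al1 al2 al3 in
  good X1 X2 X3 T /\ full X1 X2 X3 T /\
  (* every related component is a singleton *)
  (forall p q, T p -> T q -> related X1 X2 X3 T p q -> p = q) /\
  (* infinitely many related components *)
  (forall l : list (Omega X1 X2 X3),
     exists p, T p /\ forall q, In q l -> ~ related X1 X2 X3 T p q).
Proof.
  destruct Hdist as (D1 & D2 & D3 & D4 & D5 & D6 & D7 & D8 & D9); intros T.
  split; [eapply T_good; eassumption|].
  split; [eapply T_full; eassumption|].
  split.
  - intros p q; eapply related_only_self; eassumption.
  - intros l; eapply unlisted_component; eassumption.
Qed.
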